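(* Let $n\ge 3$ and let $X_n$ be the doubled regular $n$-gon. Let $\gamma\colon S^1\to X_n$ be an over-under curve between adjacent edges on $X_n$. Then: (1) if $n$ is even, $\gamma$ is a $1/n$-geodesic; (2) if $n$ is odd, $\gamma$ is a $1/2n$-geodesic.
   Context: The doubled regular $n$-gon $X_n$ is the metric space obtained by gluing two congruent regular $n$-gons (a ''top face'' and a ''bottom face'') along their common boundary edges. The distance between two points on the same face is the Euclidean distance; the distance between points $x,y$ on opposite faces is $\min_z\{d(x,z)+d(z,y)\}$, where $d$ is the Euclidean distance on each face and $z$ ranges over the boundary (edge) points. A geodesic is a locally length-minimizing curve; a closed geodesic is a map $\gamma\colon S^1\to X_n$ that is locally length minimizing at every $t\in S^1$. Geodesics are straight segments within each face and, when crossing an edge from one face to the other, reflect like billiard paths (angle of incidence equals angle of reflection). An over-under curve between adjacent edges is the closed geodesic (parametrized with constant speed and traversed once until it closes up smoothly) that passes through the midpoints of adjacent edges: its segments join the midpoints of consecutive adjacent edges, alternately on the top and bottom faces. (For $n$ even it closes smoothly after $n$ segments; for $n$ odd it needs $2n$ segments.) For $k\in\mathbb{N}$, a $1/k$-geodesic is a constant speed closed geodesic $\gamma\colon S^1\to X_n$ of length $L$ that minimizes on all subintervals of length $L/k$, i.e. for every subinterval of $S^1$ on which $\gamma$ has length $L/k$, the length of $\gamma$ restricted to it equals the distance in $X_n$ between its endpoints. *)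

From Stdlib Require Import Reals Lra Lia.
From Coquelicot Require Import Coquelicot.
Open Scope R_scope.

(* ---------- The regular n-gon P_n (circumradius 1) ----------
   Vertices v_j = (cos(2 pi j/n), sin(2 pi j/n)); edge j joins v_j and v_{j+1};
   its outward unit normal has angle (2j+1) pi / n and its distance to the
   centre is cos(pi/n). *)

Definition edge_fun (n j : nat) (x : R * R) : R :=
  fst x * cos ((2 * INR j + 1) * PI / INR n) +
  snd x * sin ((2 * INR j + 1) * PI / INR n).

Definition in_polygon (n : nat) (x : R * R) : Prop :=
  forall j : nat, (j < n)%nat -> edge_fun n j x <= cos (PI / INR n).

Definition on_boundary (n : nat) (x : R * R) : Prop :=
  in_polygon n x /\ exists j : nat, (j < n)%nat /\ edge_fun n j x = cos (PI / INR n).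

Definition eucl (x y : R * R) : R :=
  sqrt ((fst x - fst y) ^ 2 + (snd x - snd y) ^ 2).

(* ---------- The doubled n-gon X_n ----------
   A point is (face, position): face true = top, false = bottom, position in P_n.
   Boundary points of the two faces are identified (see [same_point]); the
   distance below is a pseudo-distance that vanishes exactly on identified
   points, so we work with representatives. *)

Definition Xpoint := (bool * (R * R))%type.

Definition Xdist (n : nat) (p q : Xpoint) : R :=
  if Bool.eqb (fst p) (fst q) then eucl (snd p) (snd q)
  else real (Glb_Rbar (fun r => exists z, on_boundary n z /\
                                   r = eucl (snd p) z + eucl z (snd q))).

Definition same_point (n : nat) (p q : Xpoint) : Prop :=
  p = q \/ (snd p = snd q /\ on_boundary n (snd p)).

Fixpoint psum (f : nat -> R) (m : nat) : R :=
  match m with O => 0 | S m' => psum f m' + f m' end.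

Definition polygonal_sums (n : nat) (gamma : R -> Xpoint) (a b : R) (s : R) : Prop :=
  exists (m : nat) (P : nat -> R),
    P O = a /\ P m = b /\ (forall i, (i < m)%nat -> P i <= P (S i)) /\
    s = psum (fun i => Xdist n (gamma (P i)) (gamma (P (S i)))) m.

Definition curve_length (n : nat) (gamma : R -> Xpoint) (a b l : R) : Prop :=
  is_lub (polygonal_sums n gamma a b) l.

(* ---------- 1/k-geodesics ----------
   S^1 is parametrized as R/Z: gamma : R -> X_n with gamma(t+1) = gamma(t)
   (as points of X_n).  Subintervals (arcs) of S^1 are [a,b] with a<=b<=a+1. *)

Definition one_over_k_geodesic (n k : nat) (gamma : R -> Xpoint) : Prop :=
  exists L : R, 0 < L /\
    (forall t, Xdist n (gamma (t + 1)) (gamma t) = 0) /\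
    (forall a b, a <= b -> curve_length n gamma a b ((b - a) * L)) /\
    (forall t, exists eps, 0 < eps /\ forall a b, t - eps < a -> a <= b -> b < t + eps ->
        curve_length n gamma a b (Xdist n (gamma a) (gamma b))) /\
    (forall a b, a <= b -> b <= a + 1 -> curve_length n gamma a b (L / INR k) ->
        Xdist n (gamma a) (gamma b) = L / INR k).

(* Segment i (i = 0..N-1) joins m_(e+i) to
   m_(e+i+1) on face (f0 xor (i odd)); N = n if n is even, 2n if n is odd.
   Parametrized with period 1 and constant speed. *)

Definition midpt (n j : nat) : R * R :=
  (cos (PI / INR n) * cos ((2 * INR j + 1) * PI / INR n),
   cos (PI / INR n) * sin ((2 * INR j + 1) * PI / INR n)).

Definition nsegs (n : nat) : nat := if Nat.even n then n else (2 * n)%nat.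

Definition over_under_std (n e : nat) (f0 : bool) (t : R) : Xpoint :=
  let tau := INR (nsegs n) * (t - IZR (Int_part t)) in
  let i := Z.to_nat (Int_part tau) in
  let lam := tau - INR i in
  let A := midpt n (e + i) in
  let B := midpt n (e + i + 1) in
  (xorb f0 (Nat.odd i),
   ((1 - lam) * fst A + lam * fst B, (1 - lam) * snd A + lam * snd B)).

(* gamma is an over-under curve between adjacent edges: up to the choice of
   starting edge e, starting face f0, orientation s and starting time t0,
   and up to the choice of representatives of identified boundary points. *)
Definition is_over_under (n : nat) (gamma : R -> Xpoint) : Prop :=
  exists (e : nat) (f0 : bool) (s t0 : R), (s = 1 \/ s = -1) /\
    forall t, same_point n (gamma t) (over_under_std n e f0 (s * t + t0)).

From Stdlib Require Import Reals Lra Lia ZArith Bool.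
From Coquelicot Require Import Coquelicot.
Open Scope R_scope.

(* Let M_i be the midpoints of consecutive edges, s = |M_i M_(i+1)| = sin (2 pi / n),
   and N the number of segments of the over-under curve.  Take X on [M_(i-1), M_i] at
   parameter lam and Y on [M_i, M_(i+1)] at parameter mu <= lam.  A path from X to Y on
   the other face crosses some edge; reflecting Y in the line of that edge bounds its
   length below by |X Y'|, and comparing the heights of X and Y over that line gives
   |X Y'| >= (1 - lam + mu) s, the length of the over-under path through M_i.  So the
   curve is an isometry on parameter intervals of length 1/N: its length on [a, b] is
   (b - a) N s, and every arc of length L / N is minimizing. *)

Lemma eucl_norm (x y : R * R) : eucl x y = norm (minus x y).
Proof.
  destruct x as [a b], y as [c d].
  unfold eucl, norm, minus, plus, opp; simpl. unfold prod_norm, norm, plus, opp; simpl.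
  change abs with Rabs. f_equal.
  rewrite !Rmult_1_r, <- !Rabs_mult, !Rabs_pos_eq by apply Rle_0_sqr. reflexivity.
Qed.

Lemma eucl_ge0 x y : 0 <= eucl x y.
Proof. apply sqrt_pos. Qed.

Lemma eucl_sym x y : eucl x y = eucl y x.
Proof. unfold eucl. f_equal. ring. Qed.

Lemma eucl_xx x : eucl x x = 0.
Proof. unfold eucl. rewrite !Rminus_diag, pow_i, Rplus_0_l by lia. apply sqrt_0. Qed.

Lemma eucl_triangle x y z : eucl x z <= eucl x y + eucl y z.
Proof.
  rewrite !eucl_norm. eapply Rle_trans; [|apply (norm_triangle (minus x y) (minus y z))].
  apply Req_le. f_equal.
  unfold minus. rewrite <- plus_assoc, (plus_assoc (opp y)), plus_opp_l, plus_zero_l. reflexivity.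
Qed.

Lemma broken_path_line_ge (a b c : R) (x y z : R * R) :
  a ^ 2 + b ^ 2 = 1 -> fst z * a + snd z * b = c ->
  sqrt ((fst x - fst y) ^ 2 + (snd x - snd y) ^ 2 +
        4 * (c - (fst x * a + snd x * b)) * (c - (fst y * a + snd y * b)))
  <= eucl x z + eucl z y.
Proof.
  intros Hab Hz.
  set (hx := c - (fst x * a + snd x * b)). set (hy := c - (fst y * a + snd y * b)).
  (* [y'] is the mirror image of [y] in the line through [z] with unit normal [(a, b)]. *)
  set (y' := (fst y + 2 * hy * a, snd y + 2 * hy * b)).
  assert (Hzy : eucl z y' = eucl z y).
  { unfold eucl, y'; cbn [fst snd]. f_equal.
    assert (E : (fst z - (fst y + 2 * hy * a)) ^ 2 + (snd z - (snd y + 2 * hy * b)) ^ 2 =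
                (fst z - fst y) ^ 2 + (snd z - snd y) ^ 2 + 4 * hy ^ 2 * (a ^ 2 + b ^ 2 - 1))
      by (unfold hy; rewrite <- Hz; ring).
    rewrite E, Hab. ring. }
  assert (Hxy : eucl x y' = sqrt ((fst x - fst y) ^ 2 + (snd x - snd y) ^ 2 + 4 * hx * hy)).
  { unfold eucl, y'; cbn [fst snd]. f_equal.
    assert (E : (fst x - (fst y + 2 * hy * a)) ^ 2 + (snd x - (snd y + 2 * hy * b)) ^ 2 =
                (fst x - fst y) ^ 2 + (snd x - snd y) ^ 2 + 4 * hx * hy
                + 4 * hy ^ 2 * (a ^ 2 + b ^ 2 - 1))
      by (unfold hx, hy; ring).
    rewrite E, Hab. ring. }
  rewrite <- Hzy, <- Hxy. apply eucl_triangle.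
Qed.

Section Detour.

Variable n : nat.

Definition detour_lengths (x y : R * R) (r : R) : Prop :=
  exists z, on_boundary n z /\ r = eucl x z + eucl z y.

Definition detour (x y : R * R) : R := real (Glb_Rbar (detour_lengths x y)).

Lemma Xdist_pair f g x y :
  Xdist n (f, x) (g, y) = if Bool.eqb f g then eucl x y else detour x y.
Proof. reflexivity. Qed.

Lemma detour_lengths_ge x y r : detour_lengths x y r -> eucl x y <= r.
Proof. intros [z [_ ->]]. apply eucl_triangle. Qed.

Lemma Glb_detour_lengths x y z0 : on_boundary n z0 ->
  Glb_Rbar (detour_lengths x y) = Finite (detour x y).
Proof.
  intros Hz0. unfold detour. destruct (Glb_Rbar_correct (detour_lengths x y)) as [Hlb Hglb].
  destruct (Glb_Rbar (detour_lengths x y)) as [r| |]; [reflexivity| |].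
  - exfalso. apply (Hlb (eucl x z0 + eucl z0 y)). now exists z0.
  - exfalso. apply (Hglb (Finite 0)). intros r Hr.
    pose proof (detour_lengths_ge x y r Hr). pose proof (eucl_ge0 x y). simpl. lra.
Qed.

Lemma detour_le x y z : on_boundary n z -> detour x y <= eucl x z + eucl z y.
Proof.
  intros Hz. destruct (Glb_Rbar_correct (detour_lengths x y)) as [Hlb _].
  specialize (Hlb (eucl x z + eucl z y) (ex_intro _ z (conj Hz eq_refl))).
  now rewrite (Glb_detour_lengths x y z Hz) in Hlb.
Qed.

Lemma detour_ge x y l : (exists z0, on_boundary n z0) ->
  (forall z, on_boundary n z -> l <= eucl x z + eucl z y) -> l <= detour x y.
Proof.
  intros [z0 Hz0] Hl. destruct (Glb_Rbar_correct (detour_lengths x y)) as [_ Hglb].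
  specialize (Hglb (Finite l)). rewrite (Glb_detour_lengths x y z0 Hz0) in Hglb.
  apply Hglb. intros r [z [Hz ->]]. now apply Hl.
Qed.

Lemma detour_eq x y z0 : on_boundary n z0 ->
  (forall z, on_boundary n z -> eucl x z0 + eucl z0 y <= eucl x z + eucl z y) ->
  detour x y = eucl x z0 + eucl z0 y.
Proof.
  intros Hz0 Hmin. apply Rle_antisym; [now apply detour_le|].
  apply detour_ge; [now exists z0|exact Hmin].
Qed.

Lemma detour_sym x y : detour x y = detour y x.
Proof.
  unfold detour. f_equal. apply Glb_Rbar_eqset. intros r.
  split; intros [z [Hz ->]]; exists z; split; auto; rewrite (eucl_sym x z), (eucl_sym z y); ring.
Qed.

Lemma detour_boundary_l x y : on_boundary n x -> detour x y = eucl x y.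
Proof.
  intros Hx. rewrite (detour_eq x y x Hx), eucl_xx, Rplus_0_l; [reflexivity|].
  intros z _. rewrite eucl_xx, Rplus_0_l. apply eucl_triangle.
Qed.

Hypothesis boundary_nonempty : exists z0, on_boundary n z0.

Lemma eucl_le_detour x y : eucl x y <= detour x y.
Proof. apply detour_ge; [exact boundary_nonempty|]. intros z _. apply eucl_triangle. Qed.

Lemma detour_triangle_l x y w : detour x w <= eucl x y + detour y w.
Proof.
  enough (detour x w - eucl x y <= detour y w) by lra.
  apply detour_ge; [exact boundary_nonempty|]. intros z Hz.
  pose proof (detour_le x w z Hz). pose proof (eucl_triangle x y z). lra.
Qed.

Lemma detour_triangle_r x y w : detour x w <= detour x y + eucl y w.
Proof.
  rewrite (detour_sym x w), (detour_sym x y), (eucl_sym y w), Rplus_comm.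
  apply detour_triangle_l.
Qed.

Lemma Xdist_triangle p q r : Xdist n p r <= Xdist n p q + Xdist n q r.
Proof.
  destruct p as [f x], q as [g y], r as [h w]. rewrite !Xdist_pair.
  pose proof (eucl_le_detour x y). pose proof (eucl_le_detour y w).
  pose proof (eucl_triangle x y w).
  destruct f, g, h; simpl; try lra; auto using detour_triangle_l, detour_triangle_r.
Qed.

End Detour.

Lemma Xdist_sym n p q : Xdist n p q = Xdist n q p.
Proof.
  destruct p as [f x], q as [g y]. rewrite !Xdist_pair.
  destruct f, g; simpl; auto using eucl_sym, detour_sym.
Qed.

Lemma Xdist_same_point_l n p p' q : same_point n p p' -> Xdist n p q = Xdist n p' q.
Proof.
  intros [-> | [Ex Hx]]; [reflexivity|].
  destruct p as [f x], p' as [f' x'], q as [g y]. simpl in Ex, Hx. subst x'.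
  rewrite !Xdist_pair. destruct f, f', g; simpl; rewrite ?detour_boundary_l; auto.
Qed.

Lemma Xdist_same_point n p p' q q' : same_point n p p' -> same_point n q q' ->
  Xdist n p q = Xdist n p' q'.
Proof.
  intros Hp Hq. rewrite (Xdist_same_point_l n p p' q Hp), !(Xdist_sym n p').
  now apply Xdist_same_point_l.
Qed.

Lemma Xdist_refl n p : Xdist n p p = 0.
Proof. destruct p as [f x]. rewrite Xdist_pair, eqb_reflx. apply eucl_xx. Qed.

Lemma cos_period_Z x k : cos (x + 2 * PI * IZR k) = cos x.
Proof.
  destruct (Z_le_gt_dec 0 k).
  - rewrite <- (Z2Nat.id k), <- INR_IZR_INZ, <- (cos_period x (Z.to_nat k)) by lia.
    f_equal. ring.
  - rewrite <- (cos_period (x + 2 * PI * IZR k) (Z.to_nat (- k))).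
    rewrite INR_IZR_INZ, Z2Nat.id, opp_IZR by lia. f_equal. ring.
Qed.

Lemma sin_period_Z x k : sin (x + 2 * PI * IZR k) = sin x.
Proof.
  rewrite <- !cos_shift.
  replace (PI / 2 - (x + 2 * PI * IZR k)) with (PI / 2 - x + 2 * PI * IZR (- k))
    by (rewrite opp_IZR; ring).
  apply cos_period_Z.
Qed.

Definition segpt (A B : R * R) (l : R) : R * R :=
  ((1 - l) * fst A + l * fst B, (1 - l) * snd A + l * snd B).

Lemma eucl_segpt A B l l' : eucl (segpt A B l) (segpt A B l') = Rabs (l - l') * eucl A B.
Proof.
  unfold eucl, segpt; cbn [fst snd].
  rewrite <- sqrt_Rsqr_abs, <- sqrt_mult_alt by apply Rle_0_sqr.
  f_equal. unfold Rsqr. ring.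
Qed.

Lemma heights_product_ge h0 h1 h2 d lam mu :
  0 <= mu -> mu <= lam -> lam <= 1 -> 0 <= d -> 0 <= h0 -> 0 <= h2 ->
  (h1 = 0 /\ h0 = d /\ h2 = d) \/ d <= h1 ->
  (1 - lam) * mu * d ^ 2 <= ((1 - lam) * h0 + lam * h1) * ((1 - mu) * h1 + mu * h2).
Proof.
  intros Hmu Hml Hl Hd Hh0 Hh2 [[-> [-> ->]] | Hh1].
  - apply Req_le. ring.
  - assert (Hx : lam * d <= (1 - lam) * h0 + lam * h1) by nra.
    assert (Hy : (1 - mu) * d <= (1 - mu) * h1 + mu * h2) by nra.
    apply Rle_trans with ((lam * d) * ((1 - mu) * d)); [nra|].
    apply Rmult_le_compat; nra.
Qed.

Section Polygon.

Variable n : nat.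
Hypothesis n_ge3 : (3 <= n)%nat.

Local Notation c := (cos (PI / INR n)).
Local Notation C2 := (cos (2 * (PI / INR n))).

(* For integer [t], [mid e t] is the midpoint [midpt n (e + t)] (see [midpt_mid]); for
   real [t] it moves along the circle through the midpoints. *)
Definition mid (e : nat) (t : R) : R * R :=
  (c * cos ((2 * (INR e + t) + 1) * PI / INR n),
   c * sin ((2 * (INR e + t) + 1) * PI / INR n)).

Definition mid_side : R := sin (2 * (PI / INR n)).

Definition edge_height (j : nat) (p : R * R) : R := c - edge_fun n j p.

Definition adjacent_height : R := c * (1 - C2).

Let n_pos : 0 < INR n.
Proof. apply lt_0_INR. lia. Qed.

Let angle_bounds : 0 < PI / INR n /\ 3 * (PI / INR n) <= PI.
Proof.
  pose proof PI_RGT_0.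
  assert (3 <= INR n) by (replace 3 with (INR 3) by (simpl; ring); now apply le_INR).
  split; [now apply Rdiv_lt_0_compat|].
  apply (Rmult_le_reg_r (INR n)); [lra|]. field_simplify; nra.
Qed.

Lemma apothem_pos : 0 < c.
Proof. destruct angle_bounds. apply cos_gt_0; lra. Qed.

Lemma mid_side_pos : 0 < mid_side.
Proof. destruct angle_bounds. apply sin_gt_0; lra. Qed.

Lemma mid_side_sq : mid_side ^ 2 = 2 * c ^ 2 * (1 - C2).
Proof.
  unfold mid_side. rewrite sin_2a, cos_2a_cos. pose proof (sin2_cos2 (PI / INR n)).
  unfold Rsqr in *. nra.
Qed.

Lemma midpt_mid e m t w : INR m = INR e + t + INR n * IZR w -> midpt n m = mid e t.
Proof.
  intros Hm. unfold midpt, mid.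
  replace ((2 * INR m + 1) * PI / INR n) with ((2 * (INR e + t) + 1) * PI / INR n + 2 * PI * IZR w)
    by (rewrite Hm; field; lra).
  now rewrite cos_period_Z, sin_period_Z.
Qed.

Lemma eucl_mid_succ e t : eucl (mid e t) (mid e (t + 1)) = mid_side.
Proof.
  unfold eucl, mid; cbn [fst snd].
  set (a := (2 * (INR e + t) + 1) * PI / INR n).
  replace ((2 * (INR e + (t + 1)) + 1) * PI / INR n) with (a + 2 * (PI / INR n))
    by (unfold a; field; lra).
  rewrite cos_plus, sin_plus, <- (sqrt_pow2 mid_side) by (apply Rlt_le, mid_side_pos).
  f_equal. rewrite mid_side_sq.
  pose proof (sin2_cos2 a) as Ha. pose proof (sin2_cos2 (2 * (PI / INR n))) as H2.
  unfold Rsqr in *.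
  transitivity (c ^ 2 * (sin a * sin a + cos a * cos a) *
    ((1 - C2) ^ 2 + (sin (2 * (PI / INR n)) * sin (2 * (PI / INR n)) + C2 * C2) - C2 * C2));
  [ring|]. rewrite Ha, H2. ring.
Qed.

Lemma edge_fun_mid j e t :
  edge_fun n j (mid e t) = c * cos (2 * (PI / INR n) * (INR j - INR e - t)).
Proof.
  unfold edge_fun, mid; cbn [fst snd].
  replace (2 * (PI / INR n) * (INR j - INR e - t)) with
    ((2 * INR j + 1) * PI / INR n - (2 * (INR e + t) + 1) * PI / INR n) by (field; lra).
  rewrite cos_minus. ring.
Qed.

Lemma edge_height_segpt j A B l :
  edge_height j (segpt A B l) = (1 - l) * edge_height j A + l * edge_height j B.
Proof. unfold edge_height, edge_fun, segpt; cbn [fst snd]. ring. Qed.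

Lemma edge_height_mid_ge0 j e t : 0 <= edge_height j (mid e t).
Proof.
  unfold edge_height. rewrite edge_fun_mid.
  pose proof apothem_pos. pose proof (COS_bound (2 * (PI / INR n) * (INR j - INR e - t))). nra.
Qed.

Lemma cos_step_multiple (z : Z) d : (z mod Z.of_nat n = 0)%Z ->
  cos (2 * (PI / INR n) * (IZR z + d)) = cos (2 * (PI / INR n) * d).
Proof.
  intros Hz. rewrite (Z.div_mod z (Z.of_nat n)), Hz, Z.add_0_r by lia.
  rewrite mult_IZR, <- INR_IZR_INZ, <- (cos_period_Z (2 * (PI / INR n) * d) (z / Z.of_nat n)).
  f_equal. field. lra.
Qed.

Lemma cos_step_le (z : Z) : (z mod Z.of_nat n <> 0)%Z ->
  cos (2 * (PI / INR n) * IZR z) <= C2.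
Proof.
  intros Hz. destruct angle_bounds as [Ht0 Ht3].
  pose proof (Z.mod_pos_bound z (Z.of_nat n) ltac:(lia)) as Hr.
  set (r := (z mod Z.of_nat n)%Z) in *.
  replace (2 * (PI / INR n) * IZR z) with (2 * (PI / INR n) * IZR r + 2 * PI * IZR (z / Z.of_nat n))
    by (rewrite (Z.div_mod z (Z.of_nat n)) at 2 by lia; fold r;
        rewrite plus_IZR, mult_IZR, <- INR_IZR_INZ; field; lra).
  rewrite cos_period_Z.
  assert (Hr1 : 1 <= IZR r) by (apply IZR_le; lia).
  assert (Hr2 : IZR r <= INR n - 1)
    by (rewrite INR_IZR_INZ, <- minus_IZR; apply IZR_le; lia).
  assert (Hnt : INR n * (PI / INR n) = PI) by (field; lra).
  set (y := 2 * (PI / INR n) * IZR r).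
  destruct (Rle_or_lt y PI).
  - apply cos_decr_1; unfold y in *; nra.
  - rewrite <- cos_neg, <- (cos_period_Z (- y) 1).
    replace (- y + 2 * PI * IZR 1) with (2 * PI - y) by (simpl; ring).
    apply cos_decr_1; unfold y in *; nra.
Qed.

Lemma edge_heights_mid j e (k : Z) :
  (edge_height j (mid e (IZR k)) = 0 /\
   edge_height j (mid e (IZR k - 1)) = adjacent_height /\
   edge_height j (mid e (IZR k + 1)) = adjacent_height) \/
  adjacent_height <= edge_height j (mid e (IZR k)).
Proof.
  unfold edge_height, adjacent_height. rewrite !edge_fun_mid.
  set (D := (Z.of_nat j - Z.of_nat e - k)%Z).
  assert (ED : forall d, INR j - INR e - (IZR k - d) = IZR D + d)
    by (intros; unfold D; rewrite !minus_IZR, <- !INR_IZR_INZ; ring).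
  replace (INR j - INR e - IZR k) with (IZR D + 0) by (rewrite <- ED; f_equal; ring).
  replace (INR j - INR e - (IZR k + 1)) with (IZR D + -1) by (rewrite <- ED; f_equal; ring).
  rewrite ED.
  destruct (Z.eq_dec (D mod Z.of_nat n) 0) as [HD | HD].
  - left. rewrite !cos_step_multiple by exact HD.
    replace (2 * (PI / INR n) * -1) with (- (2 * (PI / INR n))) by ring.
    rewrite Rmult_0_r, cos_0, !Rmult_1_r, cos_neg. repeat split; ring.
  - right. pose proof apothem_pos. pose proof (cos_step_le D HD). rewrite Rplus_0_r. nra.
Qed.

Lemma mid_on_boundary e (k : Z) : on_boundary n (mid e (IZR k)).
Proof.
  split.
  - intros j _. pose proof (edge_height_mid_ge0 j e (IZR k)). unfold edge_height in *. lra.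
  - set (r := ((Z.of_nat e + k) mod Z.of_nat n)%Z).
    pose proof (Z.mod_pos_bound (Z.of_nat e + k) (Z.of_nat n) ltac:(lia)) as Hr.
    exists (Z.to_nat r). split; [lia|]. rewrite edge_fun_mid.
    replace (INR (Z.to_nat r) - INR e - IZR k) with (IZR (r - (Z.of_nat e + k)) + 0)
      by (rewrite INR_IZR_INZ, Z2Nat.id by lia; rewrite minus_IZR, plus_IZR, <- INR_IZR_INZ; ring).
    rewrite cos_step_multiple, Rmult_0_r, cos_0; [ring|].
    unfold r. rewrite Zminus_mod, Z.mod_mod, Z.sub_diag by lia. reflexivity.
Qed.

Lemma eucl_sq_mid_segments e t lam mu :
  let X := segpt (mid e t) (mid e (t + 1)) lam in
  let Y := segpt (mid e (t + 1)) (mid e (t + 2)) mu in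
  (fst X - fst Y) ^ 2 + (snd X - snd Y) ^ 2 =
  c ^ 2 * ((1 - lam - mu) ^ 2 * (1 - C2) ^ 2 + (1 - lam + mu) ^ 2 * mid_side ^ 2).
Proof.
  unfold segpt, mid, mid_side; cbn [fst snd].
  set (b := (2 * (INR e + (t + 1)) + 1) * PI / INR n).
  replace ((2 * (INR e + t) + 1) * PI / INR n) with (b - 2 * (PI / INR n))
    by (unfold b; field; lra).
  replace ((2 * (INR e + (t + 2)) + 1) * PI / INR n) with (b + 2 * (PI / INR n))
    by (unfold b; field; lra).
  rewrite cos_minus, sin_minus, cos_plus, sin_plus.
  pose proof (sin2_cos2 b) as Hb. unfold Rsqr in Hb.
  transitivity (c ^ 2 * (sin b * sin b + cos b * cos b) *
    ((1 - lam - mu) ^ 2 * (1 - C2) ^ 2 + (1 - lam + mu) ^ 2 * sin (2 * (PI / INR n)) ^ 2));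
  [ring|]. rewrite Hb. ring.
Qed.

Lemma edge_heights_mid_segments j e (k : Z) lam mu : 0 <= mu -> mu <= lam -> lam <= 1 ->
  (1 - lam) * mu * adjacent_height ^ 2 <=
  edge_height j (segpt (mid e (IZR k)) (mid e (IZR k + 1)) lam) *
  edge_height j (segpt (mid e (IZR k + 1)) (mid e (IZR k + 2)) mu).
Proof.
  intros Hmu Hml Hl. rewrite !edge_height_segpt.
  pose proof apothem_pos. pose proof (COS_bound (2 * (PI / INR n))).
  apply heights_product_ge; auto using edge_height_mid_ge0.
  - unfold adjacent_height. nra.
  - destruct (edge_heights_mid j e (k + 1)) as [Hon | Hoff]; [left | right];
      rewrite plus_IZR in *; [|exact Hoff].
    replace (IZR k + 1 - 1) with (IZR k) in Hon by ring.
    replace (IZR k + 1 + 1) with (IZR k + 2) in Hon by ring.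
    tauto.
Qed.

Lemma mid_segments_path_ge e (k : Z) lam mu z : 0 <= mu -> mu <= lam -> lam <= 1 ->
  on_boundary n z ->
  (1 - lam + mu) * mid_side <=
  eucl (segpt (mid e (IZR k)) (mid e (IZR k + 1)) lam) z +
  eucl z (segpt (mid e (IZR k + 1)) (mid e (IZR k + 2)) mu).
Proof.
  intros Hmu Hml Hl [_ [j [_ Hz]]].
  pose proof (edge_heights_mid_segments j e k lam mu Hmu Hml Hl) as Hprod.
  unfold edge_height, edge_fun in Hprod.
  set (alpha := (2 * INR j + 1) * PI / INR n) in *.
  assert (Hunit : cos alpha ^ 2 + sin alpha ^ 2 = 1)
    by (pose proof (sin2_cos2 alpha); unfold Rsqr in *; lra).
  eapply Rle_trans; [|exact (broken_path_line_ge _ _ _ _ _ z Hunit Hz)].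
  rewrite eucl_sq_mid_segments, <- (sqrt_pow2 ((1 - lam + mu) * mid_side))
    by (pose proof mid_side_pos; nra).
  apply sqrt_le_1_alt. rewrite Rpow_mult_distr.
  assert (Hside : c ^ 2 * ((1 - C2) ^ 2 + mid_side ^ 2) = mid_side ^ 2).
  { rewrite mid_side_sq at 2. pose proof (sin2_cos2 (2 * (PI / INR n))).
    unfold mid_side, Rsqr in *. nra. }
  assert (E : (1 - lam + mu) ^ 2 * mid_side ^ 2 =
              c ^ 2 * ((1 - lam - mu) ^ 2 * (1 - C2) ^ 2 + (1 - lam + mu) ^ 2 * mid_side ^ 2)
              + 4 * ((1 - lam) * mu * adjacent_height ^ 2))
    by (rewrite <- Hside at 1; unfold adjacent_height; ring).
  lra.
Qed.

Lemma detour_mid_segments e (k : Z) lam mu : 0 <= mu -> mu <= lam -> lam <= 1 ->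
  detour n (segpt (mid e (IZR k)) (mid e (IZR k + 1)) lam)
           (segpt (mid e (IZR k + 1)) (mid e (IZR k + 2)) mu) = (1 - lam + mu) * mid_side.
Proof.
  intros Hmu Hml Hl.
  assert (HM : on_boundary n (mid e (IZR k + 1)))
    by (rewrite <- plus_IZR; apply mid_on_boundary).
  assert (HXM : eucl (segpt (mid e (IZR k)) (mid e (IZR k + 1)) lam) (mid e (IZR k + 1)) =
                (1 - lam) * mid_side).
  { replace (mid e (IZR k + 1)) with (segpt (mid e (IZR k)) (mid e (IZR k + 1)) 1) at 2
      by (unfold segpt; destruct (mid e (IZR k + 1)); simpl; f_equal; ring).
    rewrite eucl_segpt, eucl_mid_succ, Rabs_left1 by lra. ring. }
  assert (HMY : eucl (mid e (IZR k + 1)) (segpt (mid e (IZR k + 1)) (mid e (IZR k + 2)) mu) =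
                mu * mid_side).
  { replace (mid e (IZR k + 1)) with (segpt (mid e (IZR k + 1)) (mid e (IZR k + 2)) 0) at 1
      by (unfold segpt; destruct (mid e (IZR k + 1)); simpl; f_equal; ring).
    replace (IZR k + 2) with (IZR k + 1 + 1) by ring.
    rewrite eucl_segpt, eucl_mid_succ, Rabs_left1 by lra. ring. }
  rewrite (detour_eq n _ _ (mid e (IZR k + 1)) HM), HXM, HMY; [ring|].
  intros z Hz. rewrite HXM, HMY, <- Rmult_plus_distr_r.
  now apply mid_segments_path_ge.
Qed.

End Polygon.

Lemma psum_const f r m : (forall i, (i < m)%nat -> f i = r) -> psum f m = INR m * r.
Proof.
  induction m as [|m IH]; intros Hf; cbn [psum]; [simpl; ring|].
  rewrite S_INR, IH, Hf; [ring | lia | intros; apply Hf; lia].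
Qed.

Section LocalIsometry.

Variables (n : nat) (gamma : R -> Xpoint) (L delta : R).
Hypothesis boundary_nonempty : exists z0, on_boundary n z0.
Hypothesis delta_pos : 0 < delta.
Hypothesis local_isometry : forall a b, a <= b -> b <= a + delta ->
  Xdist n (gamma a) (gamma b) = (b - a) * L.

Lemma Xdist_curve_le a b : a <= b -> Xdist n (gamma a) (gamma b) <= (b - a) * L.
Proof.
  intros Hab. destruct (INR_archimed delta (b - a) delta_pos) as [m Hm].
  revert a Hab Hm. induction m as [|m IH]; intros a Hab Hm.
  - simpl in Hm. lra.
  - destruct (Rle_or_lt b (a + delta)) as [Hb | Hb].
    + rewrite local_isometry by lra. lra.
    + pose proof (Xdist_triangle n boundary_nonempty (gamma a) (gamma (a + delta)) (gamma b))
        as Htri.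
      rewrite (local_isometry a (a + delta)) in Htri by lra.
      assert (Xdist n (gamma (a + delta)) (gamma b) <= (b - (a + delta)) * L)
        by (rewrite S_INR, Rmult_plus_distr_r, Rmult_1_l in Hm; apply IH; lra).
      lra.
Qed.

Lemma curve_length_local_isometry a b : a <= b -> curve_length n gamma a b ((b - a) * L).
Proof.
  intros Hab. split.
  - intros r [m [P [HP0 [HPm [Hmono ->]]]]]. subst a b.
    enough (forall i, (i <= m)%nat ->
      psum (fun i => Xdist n (gamma (P i)) (gamma (P (S i)))) i <= (P i - P O) * L)
      by auto.
    induction i as [|i IH]; intros Hi; simpl; [lra|].
    pose proof (IH ltac:(lia)). pose proof (Xdist_curve_le _ _ (Hmono i ltac:(lia))). lra.
  - intros ub Hub. apply Hub.
    destruct (INR_archimed delta (b - a) delta_pos) as [M HM].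
    assert (HM0 : 0 < INR M) by nra.
    set (h := (b - a) / INR M).
    assert (Hh : 0 <= h <= delta).
    { unfold h. split; [apply Rdiv_le_0_compat; lra|].
      apply Rle_div_l; lra. }
    exists M, (fun i => a + INR i * h). repeat split.
    + simpl. ring.
    + unfold h. field. lra.
    + intros i _. rewrite S_INR. lra.
    + rewrite (psum_const _ (h * L)).
      * unfold h. field. lra.
      * intros i _. rewrite local_isometry; rewrite S_INR; [ring | lra | lra].
Qed.

End LocalIsometry.

Lemma one_over_k_geodesic_of_local_isometry n k gamma L :
  (0 < k)%nat -> (exists z0, on_boundary n z0) -> 0 < L ->
  (forall t, Xdist n (gamma (t + 1)) (gamma t) = 0) ->
  (forall a b, a <= b -> b <= a + / INR k -> Xdist n (gamma a) (gamma b) = (b - a) * L) ->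
  one_over_k_geodesic n k gamma.
Proof.
  intros Hk Hbd HL Hclosed Hloc.
  assert (Hdelta : 0 < / INR k) by (apply Rinv_0_lt_compat, lt_0_INR; lia).
  pose proof (curve_length_local_isometry n gamma L (/ INR k) Hbd Hdelta Hloc) as Hlen.
  exists L. split; [exact HL|]. split; [exact Hclosed|]. split; [exact Hlen|]. split.
  - intros t. exists (/ INR k / 2). split; [lra|].
    intros a b Ha Hab Hb. rewrite Hloc by lra. now apply Hlen.
  - intros a b Hab _ HLk.
    assert (Hba : b - a = / INR k).
    { pose proof (is_lub_u _ _ _ HLk (Hlen a b Hab)) as Hlub.
      apply (Rmult_eq_reg_r L); [|lra]. rewrite <- Hlub. unfold Rdiv. ring. }
    rewrite Hloc, Hba by lra. unfold Rdiv. ring.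
Qed.

Lemma Z_odd_of_nat i : Z.odd (Z.of_nat i) = Nat.odd i.
Proof.
  induction i as [|i IH]; [reflexivity|].
  now rewrite Nat2Z.inj_succ, Z.odd_succ, Nat.odd_succ, <- Z.negb_odd, <- Nat.negb_odd, IH.
Qed.

Lemma Int_part_plus_IZR r k : Int_part (r + IZR k) = (Int_part r + k)%Z.
Proof.
  symmetry. apply Int_part_spec. rewrite plus_IZR. pose proof (base_Int_part r). lra.
Qed.

Lemma Int_part_nonneg r : 0 <= r -> (0 <= Int_part r)%Z.
Proof.
  intros Hr. pose proof (base_Int_part r) as [_ Hint].
  assert (Hlt : IZR (-1) < IZR (Int_part r)) by lra. apply lt_IZR in Hlt. lia.
Qed.

Lemma nsegs_spec n : Nat.Even (nsegs n) /\ Nat.divide n (nsegs n).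
Proof.
  unfold nsegs. destruct (Nat.even n) eqn:Ev.
  - split; [now apply Nat.even_spec | apply Nat.divide_refl].
  - split; [now exists n | now exists 2%nat].
Qed.

Section OverUnder.

Variable n : nat.
Hypothesis n_ge3 : (3 <= n)%nat.

Local Notation N := (INR (nsegs n)).

(* [over_under_std] with the segment index [Int_part (N * u)] not reduced modulo the
   period, so that a short parameter interval meets segments with consecutive indices. *)
Definition ou_curve (e : nat) (f0 : bool) (u : R) : Xpoint :=
  let K := Int_part (N * u) in
  (xorb f0 (Z.odd K), segpt (mid n e (IZR K)) (mid n e (IZR K + 1)) (N * u - IZR K)).

Lemma nsegs_pos : 0 < N.
Proof. apply lt_0_INR. unfold nsegs. destruct (Nat.even n); lia. Qed.

Lemma ou_curve_dist e f0 u v : u <= v -> v <= u + / N ->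
  Xdist n (ou_curve e f0 u) (ou_curve e f0 v) = (v - u) * (N * mid_side n).
Proof.
  intros Huv Hv. pose proof nsegs_pos as HN.
  assert (HNv : N * v <= N * u + 1).
  { rewrite <- (Rinv_r N) by lra. rewrite <- Rmult_plus_distr_l. apply Rmult_le_compat_l; lra. }
  assert (HNu : N * u <= N * v) by (apply Rmult_le_compat_l; lra).
  unfold ou_curve.
  set (K := Int_part (N * u)). set (K' := Int_part (N * v)).
  pose proof (base_Int_part (N * u)) as [B1 B2]. pose proof (base_Int_part (N * v)) as [B3 B4].
  fold K in B1, B2. fold K' in B3, B4.
  assert (HK : K' = K \/ K' = (K + 1)%Z).
  { assert (Hlo : IZR (K - 1) < IZR K') by (rewrite minus_IZR; lra).
    assert (Hhi : IZR K' < IZR (K + 2)) by (rewrite plus_IZR; lra).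
    apply lt_IZR in Hlo, Hhi. lia. }
  rewrite Xdist_pair. destruct HK as [-> | ->].
  - rewrite eqb_reflx, eucl_segpt, (eucl_mid_succ n n_ge3), Rabs_left1 by lra. ring.
  - replace (Bool.eqb (xorb f0 (Z.odd K)) (xorb f0 (Z.odd (K + 1)))) with false
      by (rewrite Z.odd_add; destruct f0, (Z.odd K); reflexivity).
    rewrite plus_IZR in *. replace (IZR K + 1 + 1) with (IZR K + 2) by ring.
    rewrite (detour_mid_segments n n_ge3) by lra. ring.
Qed.

Lemma over_under_std_eq e f0 u : over_under_std n e f0 u = ou_curve e f0 u.
Proof.
  destruct (nsegs_spec n) as [[h Hh] [m Hm]].
  unfold over_under_std, ou_curve.
  set (z := Int_part u). set (K := Int_part (N * u)).
  set (Nz := (Z.of_nat (nsegs n) * z)%Z).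
  assert (ENz : N * IZR z = IZR Nz) by (unfold Nz; rewrite mult_IZR, <- INR_IZR_INZ; reflexivity).
  assert (EK : Int_part (N * (u - IZR z)) = (K - Nz)%Z).
  { replace (N * (u - IZR z)) with (N * u + IZR (- Nz)) by (rewrite opp_IZR, <- ENz; ring).
    apply Int_part_plus_IZR. }
  rewrite EK.
  assert (Hpos : (0 <= K - Nz)%Z).
  { rewrite <- EK. apply Int_part_nonneg. pose proof (base_Int_part u) as [Hz _].
    pose proof nsegs_pos. fold z in Hz. nra. }
  set (i := Z.to_nat (K - Nz)).
  assert (Ei : INR i = IZR K - IZR Nz)
    by (unfold i; rewrite INR_IZR_INZ, Z2Nat.id, minus_IZR by lia; reflexivity).
  assert (Ew : IZR Nz = INR n * IZR (Z.of_nat m * z))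
    by (rewrite <- ENz, Hm, mult_IZR, <- INR_IZR_INZ, mult_INR; ring).
  replace (N * (u - IZR z) - INR i) with (N * u - IZR K) by (rewrite Ei, <- ENz; ring).
  replace (Nat.odd i) with (Z.odd K).
  - rewrite (midpt_mid n n_ge3 e (e + i) (IZR K) (- (Z.of_nat m * z))),
      (midpt_mid n n_ge3 e (e + i + 1) (IZR K + 1) (- (Z.of_nat m * z)))
      by (rewrite ?plus_INR, Ei, Ew, opp_IZR; simpl; ring).
    reflexivity.
  - rewrite <- Z_odd_of_nat. unfold i. rewrite Z2Nat.id by lia.
    unfold Nz. rewrite Z.odd_sub, Z.odd_mul, Hh, Nat2Z.inj_mul, Z.odd_mul. simpl.
    destruct (Z.odd K); reflexivity.
Qed.

Lemma ou_curve_periodic e f0 u : ou_curve e f0 (u + 1) = ou_curve e f0 u.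
Proof.
  rewrite <- !over_under_std_eq. unfold over_under_std.
  rewrite (Int_part_plus_IZR u 1), plus_IZR.
  replace (u + 1 - (IZR (Int_part u) + 1)) with (u - IZR (Int_part u)) by ring.
  reflexivity.
Qed.

End OverUnder.

Lemma over_under_geodesic n gamma : (3 <= n)%nat -> is_over_under n gamma ->
  one_over_k_geodesic n (nsegs n) gamma.
Proof.
  intros Hn [e [f0 [s [t0 [Hs Hgamma]]]]].
  pose proof (nsegs_pos n Hn) as HN.
  assert (Hdist : forall a b, Xdist n (gamma a) (gamma b) =
            Xdist n (ou_curve n e f0 (s * a + t0)) (ou_curve n e f0 (s * b + t0)))
    by (intros; rewrite <- !over_under_std_eq by exact Hn; now apply Xdist_same_point).
  apply one_over_k_geodesic_of_local_isometry with (L := INR (nsegs n) * mid_side n).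
  - apply INR_lt. simpl. lra.
  - exists (mid n e (IZR 0)). now apply mid_on_boundary.
  - pose proof (mid_side_pos n Hn). nra.
  - intros t. rewrite Hdist.
    replace (ou_curve n e f0 (s * (t + 1) + t0)) with (ou_curve n e f0 (s * t + t0));
      [apply Xdist_refl|].
    destruct Hs as [-> | ->].
    + rewrite <- ou_curve_periodic by exact Hn. f_equal. ring.
    + rewrite <- (ou_curve_periodic n Hn e f0 (-1 * (t + 1) + t0)). f_equal. ring.
  - intros a b Hab Hb. rewrite Hdist.
    destruct Hs as [-> | ->]; [|rewrite Xdist_sym]; rewrite ou_curve_dist by (auto; lra); ring.
Qed.

Theorem mainTheorem1 (n : nat) (gamma : R -> Xpoint) :
  (3 <= n)%nat -> is_over_under n gamma ->
  (Nat.Even n -> one_over_k_geodesic n n gamma) /\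
  (Nat.Odd n -> one_over_k_geodesic n (2 * n) gamma).
Proof.
  intros Hn Hgamma. pose proof (over_under_geodesic n gamma Hn Hgamma) as Hgeo.
  unfold nsegs in Hgeo. split; intros Hpar.
  - now rewrite (proj2 (Nat.even_spec n) Hpar) in Hgeo.
  - now rewrite <- Nat.negb_odd, (proj2 (Nat.odd_spec n) Hpar) in Hgeo.
Qed.
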